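(* Let $(a_i)_{i\ge0},(b_i)_{i\ge0},(c_i)_{i\ge0},(d_i)_{i\ge0}$ be integer sequences with all $b_i\neq0$, $d_i\ne 0$, and consider the bifurcating continued fraction with partial quotients $\alpha_i=a_i/b_i$ and $\beta_i=c_i/d_i$. Define rational numbers $A_n,B_n,C_n$ (together with $A_{n-1},A_{n-2}$, etc.) for $n\ge0$ by $$\begin{pmatrix}\alpha_0&1&0\\ \beta_0&0&1\\1&0&0\end{pmatrix}\cdots\begin{pmatrix}\alpha_n&1&0\\ \beta_n&0&1\\1&0&0\end{pmatrix}=\begin{pmatrix}A_n&A_{n-1}&A_{n-2}\\ B_n&B_{n-1}&B_{n-2}\\ C_n&C_{n-1}&C_{n-2}\end{pmatrix},$$ so that the $n$th convergent is $(A_n/C_n,B_n/C_n)$. Define $s_{-1}=1/d_0$, $s_0=a_0$, $s_1=a_0a_1d_1+b_0b_1c_1$ and, for $n\ge2$, $$s_n=a_nd_ns_{n-1}+b_nb_{n-1}c_nd_{n-1}s_{n-2}+b_nb_{n-1}b_{n-2}d_nd_{n-1}d_{n-2}s_{n-3},$$ and define $t_0=b_0$, $t_n=b_0\prod_{i=1}^n b_id_i$ for $n\ge1$. Then $A_n=s_n/t_n$ for every $n\ge0$.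
   Context: Equivalently, $A_{-2}=0$, $A_{-1}=1$, $A_0=\alpha_0$, and $A_n=\alpha_nA_{n-1}+\beta_nA_{n-2}+A_{n-3}$ for $n\ge1$ (with analogous recurrences for $B_n$, $C_n$). *)

From HB Require Import structures.
From mathcomp Require Import all_boot all_order all_algebra.
Set Implicit Arguments. Unset Strict Implicit. Unset Printing Implicit Defensive.
Import Order.TTheory GRing.Theory Num.Theory.
Local Open Scope ring_scope.

Definition alpha (a b : nat -> int) (i : nat) : rat := (a i)%:~R / (b i)%:~R.
Definition beta (c d : nat -> int) (i : nat) : rat := (c i)%:~R / (d i)%:~R.

Definition bifMat (a b c d : nat -> int) (i : nat) : 'M[rat]_3 :=
  \matrix_(r < 3, k < 3)
    (if (val r == 0%N) && (val k == 0%N) then alpha a b i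
     else if (val r == 0%N) && (val k == 1%N) then 1
     else if (val r == 1%N) && (val k == 0%N) then beta c d i
     else if (val r == 1%N) && (val k == 2%N) then 1
     else if (val r == 2%N) && (val k == 0%N) then 1
     else 0).

Definition bifProd (a b c d : nat -> int) (n : nat) : 'M[rat]_3 :=
  \prod_(i < n.+1) bifMat a b c d i.

Definition An (a b c d : nat -> int) (n : nat) : rat :=
  bifProd a b c d n ord0 ord0.

(* sTriple k = (s_{k+1}, s_k, s_{k-1}) *)
Fixpoint sTriple (a b c d : nat -> int) (k : nat) : rat * rat * rat :=
  match k with
  | 0%N => (((a 0%N * a 1%N * d 1%N + b 0%N * b 1%N * c 1%N)%R)%:~R,
            (a 0%N)%:~R, 1 / (d 0%N)%:~R)
  | k'.+1 =>
      let '(s1, s2, s3) := sTriple a b c d k' in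
      let m := k'.+2 in
      ((a m * d m)%:~R * s1
       + (b m * b m.-1 * c m * d m.-1)%:~R * s2
       + (b m * b m.-1 * b m.-2 * d m * d m.-1 * d m.-2)%:~R * s3,
       s1, s2)
  end.

Definition s_seq (a b c d : nat -> int) (n : nat) : rat :=
  match n with
  | 0%N => (a 0%N)%:~R
  | k.+1 => (sTriple a b c d k).1.1
  end.

Definition t_seq (b d : nat -> int) (n : nat) : rat :=
  match n with
  | 0%N => (b 0%N)%:~R
  | _ => (b 0%N)%:~R * \prod_(1 <= i < n.+1) ((b i)%:~R * (d i)%:~R)
  end.

(** The first row of [M_0 ... M_n] is [(A_n, A_{n-1}, A_{n-2})], and multiplying
    by [M_{n+1}] on the right turns it into
    [(alpha A_n + beta A_{n-1} + A_{n-2}, A_n, A_{n-1})].  Writing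
    [A_j = s_j / t_j] with [t_{-1} = 1/d_0], the identity
    [t_j = b_j d_j t_{j-1}] puts the three terms of this recurrence over the
    common denominator [t_{n+1}], and the numerator obtained is exactly the
    recurrence defining [s_{n+1}]. *)

From HB Require Import structures.
From mathcomp Require Import all_boot all_order all_algebra.
From mathcomp Require Import ring.
Import Order.TTheory GRing.Theory Num.Theory.
Local Open Scope ring_scope.

Section BifurcatingConvergents.
Variables a b c d : nat -> int.

Local Notation P := (bifProd a b c d).
Local Notation i0 := (@ord0 2).
Local Notation i1 := (@Ordinal 3 1 isT).
Local Notation i2 := (@ord_max 2).

Lemma bifProdS n : P n.+1 = P n * bifMat a b c d n.+1.
Proof. by rewrite /bifProd big_ord_recr. Qed.

Lemma bifProd0_row0 : [/\ P 0 i0 i0 = alpha a b 0, P 0 i0 i1 = 1 & P 0 i0 i2 = 0].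
Proof. by rewrite /bifProd big_ord1 !mxE. Qed.

Lemma bifProdS_row0 n :
  [/\ P n.+1 i0 i0 = alpha a b n.+1 * P n i0 i0 + beta c d n.+1 * P n i0 i1 + P n i0 i2,
      P n.+1 i0 i1 = P n i0 i0 & P n.+1 i0 i2 = P n i0 i1].
Proof.
have E0 : widen_ord (leqnSn 2) (widen_ord (leqnSn 1) (@ord_max 0)) = i0 by exact: val_inj.
have E1 : widen_ord (leqnSn 2) (@ord_max 1) = i1 by exact: val_inj.
rewrite bifProdS !mxE !big_ord_recr !big_ord0 /= !mxE /= E0 E1.
by split; ring.
Qed.

Hypothesis hb : forall i, b i != 0.
Hypothesis hd : forall i, d i != 0.

Lemma b_neq0 i : (b i)%:~R != 0 :> rat. Proof. by rewrite intr_eq0. Qed.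
Lemma d_neq0 i : (d i)%:~R != 0 :> rat. Proof. by rewrite intr_eq0. Qed.

(* [tau j.+1 = t_j]; the extra value [tau 0 = t_{-1} = 1/d_0] matches [s_{-1}]. *)
Definition tau (j : nat) : rat := if j is j'.+1 then t_seq b d j' else 1 / (d 0%N)%:~R.

Lemma tauS j : tau j.+1 = (b j)%:~R * (d j)%:~R * tau j.
Proof.
case: j => [|[|j]] /=; rewrite /t_seq.
- by field; exact: d_neq0.
- by rewrite big_nat1 mulrC.
- by rewrite big_nat_recr //= [RHS]mulrC -mulrA.
Qed.

Lemma tau_neq0 j : tau j != 0.
Proof.
elim: j => [|j IH]; first by rewrite /= div1r invr_eq0 d_neq0.
by rewrite tauS !mulf_neq0 ?b_neq0 ?d_neq0.
Qed.

Arguments tau : simpl never.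

Lemma convergent_numerator_step k (s1 s2 s3 : rat) :
  let m := k.+2 in
  alpha a b m * (s1 / tau m) + beta c d m * (s2 / tau k.+1) + s3 / tau k
  = ((a m * d m)%:~R * s1 + (b m * b k.+1 * c m * d k.+1)%:~R * s2
     + (b m * b k.+1 * b k * d m * d k.+1 * d k)%:~R * s3) / tau m.+1.
Proof.
rewrite /= /alpha /beta !tauS !rmorphM /=.
have := tau_neq0 k; have := b_neq0 k; have := b_neq0 k.+1; have := b_neq0 k.+2.
have := d_neq0 k; have := d_neq0 k.+1; have := d_neq0 k.+2.
by move=> *; field; rewrite ?andbT; repeat (apply/andP; split).
Qed.

Lemma bifProd_row0_sTriple k :
  let '(s1, s2, s3) := sTriple a b c d k in
  [/\ P k.+1 i0 i0 = s1 / tau k.+2, P k.+1 i0 i1 = s2 / tau k.+1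
    & P k.+1 i0 i2 = s3 / tau k].
Proof.
elim: k => [|k IH] /=.
  have [Q0 Q1 Q2] := bifProd0_row0; have [R0 R1 R2] := bifProdS_row0 0.
  rewrite R0 R1 R2 Q0 Q1 Q2 !tauS /tau /= /alpha /beta !rmorphD !rmorphM /=.
  have := b_neq0 0; have := b_neq0 1; have := d_neq0 0; have := d_neq0 1.
  by move=> *; split; field; rewrite ?andbT; repeat (apply/andP; split).
case: (sTriple a b c d k) IH => [[s1 s2] s3] [I0 I1 I2].
have [R0 R1 R2] := bifProdS_row0 k.+1.
by rewrite R0 R1 R2 I0 I1 I2 convergent_numerator_step.
Qed.

End BifurcatingConvergents.

Theorem mainTheorem2 (a b c d : nat -> int)
  (hb : forall i : nat, b i != 0) (hd : forall i : nat, d i != 0) (n : nat) :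
  An a b c d n = s_seq a b c d n / t_seq b d n.
Proof.
rewrite /An /s_seq; case: n => [|k]; first by have [-> _ _] := bifProd0_row0 a b c d.
have := bifProd_row0_sTriple a b c d hb hd k.
by case: (sTriple a b c d k) => [[s1 s2] s3] [-> _ _].
Qed.
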